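(* Let $Q$ be a commutative A-loop and define $x\oplus y = \big( ((xy)\backslash x)\cdot((yx)\backslash y)\big)^{-1}$. Then $(Q,\oplus)$ is a power-associative commutative loop with the same neutral element as $Q$, and powers in $(Q,\oplus)$ coincide with powers in $Q$.
   Context: A loop is a set with a binary operation and neutral element $1$ in which all left and right translations are bijections; $\mathrm{Inn}(Q)$ is the stabilizer of $1$ in the group generated by all translations. A commutative A-loop is a commutative loop all of whose inner mappings are automorphisms. $x\backslash y$ is the unique $z$ with $xz=y$, $x^{-1}=x\backslash 1$. Powers are defined by $x^n=1L_x^n$, $n\in\mathbb{Z}$, where $L_x$ is left translation in the relevant loop; a loop is power-associative if each element generates a subgroup. *)

From mathcomp Require Import ssreflect ssrfun ssrbool.
From Stdlib Require Import ZArith.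

Set Implicit Arguments.

Section Loops.
Variable T : Type.
Variable mul : T -> T -> T.
Variable e : T.

Definition is_loop : Prop :=
  (forall x, mul e x = x) /\ (forall x, mul x e = x) /\
  (forall x, bijective (mul x)) /\ (forall x, bijective (fun y => mul y x)).

Definition commutative_op : Prop := forall x y, mul x y = mul y x.

Definition is_ldiv (ldiv : T -> T -> T) : Prop := forall x y, mul x (ldiv x y) = y.
Definition is_rdiv (rdiv : T -> T -> T) : Prop := forall x y, mul (rdiv y x) x = y.

Variables ldiv rdiv : T -> T -> T.

(* Elements of the multiplication group Mlt(Q): the group generated by all
   translations L_x, R_x consists of the finite composites of
   L_x, R_x and their inverses L_x^{-1} = ldiv x, R_x^{-1} = rdiv _ x. *)
Inductive in_mlt : (T -> T) -> Prop :=
  | mlt_id : in_mlt (fun y => y)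
  | mlt_L x f : in_mlt f -> in_mlt (fun y => mul x (f y))
  | mlt_Linv x f : in_mlt f -> in_mlt (fun y => ldiv x (f y))
  | mlt_R x f : in_mlt f -> in_mlt (fun y => mul (f y) x)
  | mlt_Rinv x f : in_mlt f -> in_mlt (fun y => rdiv (f y) x).

Definition inner_mapping (f : T -> T) : Prop := in_mlt f /\ f e = e.

Definition automorphism (f : T -> T) : Prop :=
  bijective f /\ forall x y, f (mul x y) = mul (f x) (f y).

Definition commutative_A_loop : Prop :=
  is_loop /\ is_ldiv ldiv /\ is_rdiv rdiv /\ commutative_op /\
  forall f, inner_mapping f -> automorphism f.

Inductive gen (x : T) : T -> Prop :=
  | gen_x : gen x x
  | gen_e : gen x e
  | gen_mul a b : gen x a -> gen x b -> gen x (mul a b)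
  | gen_ldiv a b : gen x a -> gen x b -> gen x (ldiv a b)
  | gen_rdiv a b : gen x a -> gen x b -> gen x (rdiv a b).

(* Power-associative: every element generates a subgroup, i.e. the subloop
   generated by x is associative. *)
Definition power_associative : Prop :=
  forall x a b c, gen x a -> gen x b -> gen x c ->
    mul a (mul b c) = mul (mul a b) c.

Definition lpow (x : T) (n : Z) : T :=
  match n with
  | Z0 => e
  | Zpos p => Nat.iter (Pos.to_nat p) (mul x) e
  | Zneg p => Nat.iter (Pos.to_nat p) (ldiv x) e
  end.

End Loops.

Definition linv (T : Type) (ldiv : T -> T -> T) (e x : T) : T := ldiv x e.

Definition oplus (T : Type) (mul ldiv : T -> T -> T) (e : T) (x y : T) : T :=
  linv ldiv e (mul (ldiv (mul x y) x) (ldiv (mul y x) y)).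

From mathcomp Require Import ssreflect ssrfun ssrbool.
From Stdlib Require Import ZArith Lia.

(* The inner mappings L(p,q) = L_{pq}^{-1} L_p L_q ([linner p q]) are
   automorphisms fixing p.  Applied to L(xy, x^{-1}) this yields the
   automorphic inverse property (xy)^{-1} = x^{-1} y^{-1}; applied to L(x,y)
   it yields ((xy)\x)^{-1} = L(x,y) y.  Together they rewrite x ⊕ y as
   x\(x\(x^2 (x ((xy)\x)^{-1}))), a composite of bijections of y.
   An automorphism fixing x fixes every power of x; with L(x,x) and L(x^k,x)
   this gives x^m x^n = x^(m+n), hence x^m ⊕ x^n = x^(m+n).  So the subloop
   of (Q,⊕) generated by x consists of powers of x, and the powers of the two
   loops agree. *)

Set Implicit Arguments.
Unset Strict Implicit.

Section LeftPowers.
Variables (T : Type) (mul ldiv : T -> T -> T) (e : T).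
Hypothesis mulK : forall x y, ldiv x (mul x y) = y.
Hypothesis divK : forall x y, mul x (ldiv x y) = y.

Local Notation pw := (lpow mul e ldiv).

Lemma lpow_of_nat x k : pw x (Z.of_nat k) = Nat.iter k (mul x) e.
Proof. by case: k => [|k] //=; rewrite SuccNat2Pos.id_succ. Qed.

Lemma lpow_opp_of_nat x k : pw x (- Z.of_nat k) = Nat.iter k (ldiv x) e.
Proof. by case: k => [|k] //=; rewrite SuccNat2Pos.id_succ. Qed.

Lemma lpow_succ x n : pw x (Z.succ n) = mul x (pw x n).
Proof.
case: (Z.le_gt_cases 0 n) => [/Z2Nat.id <- | n_neg].
  by rewrite -Nat2Z.inj_succ !lpow_of_nat.
have [k ->] : exists k, n = (- Z.of_nat (S k))%Z.
  by exists (Z.to_nat (- n) - 1)%nat; lia.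
have -> : Z.succ (- Z.of_nat (S k)) = (- Z.of_nat k)%Z by lia.
by rewrite !lpow_opp_of_nat /= divK.
Qed.

Lemma lpow_pred x n : pw x (Z.pred n) = ldiv x (pw x n).
Proof. by rewrite -{2}(Z.succ_pred n) lpow_succ mulK. Qed.

Lemma lpow_unique x (h : Z -> T) :
  h 0%Z = e -> (forall n, h (Z.succ n) = mul x (h n)) -> forall n, pw x n = h n.
Proof.
move=> h0 hS; elim/Z.peano_ind => [|n IH|n IH] //.
  by rewrite lpow_succ IH hS.
by rewrite lpow_pred IH -{1}(Z.succ_pred n) hS mulK.
Qed.

End LeftPowers.

Declare Scope loop_scope.

Section CommutativeALoop.
Variables (T : Type) (mul ldiv rdiv : T -> T -> T) (e : T).
Hypothesis Q : commutative_A_loop mul e ldiv rdiv.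

Local Notation "x * y" := (mul x y) : loop_scope.
Local Notation "x \ y" := (ldiv x y) (at level 40, left associativity) : loop_scope.
Local Notation "x ^-1" := (ldiv x e) : loop_scope.
Local Notation "x ⊕ y" := (oplus mul ldiv e x y) (at level 50, left associativity).
Local Notation pw := (lpow mul e ldiv).
Local Open Scope loop_scope.

Lemma mulC x y : x * y = y * x.
Proof. by case: Q => _ [_ [_ []]]. Qed.

Lemma mul1q x : e * x = x.
Proof. by case: Q => [[]]. Qed.

Lemma mulq1 x : x * e = x.
Proof. by case: Q => [[_ []]]. Qed.

Lemma divKq x y : x * (x \ y) = y.
Proof. by case: Q => _ []. Qed.

Lemma mulqI x : injective (mul x).
Proof. by case: Q => [[_ [_ [left_bij _]]] _]; apply: bij_inj. Qed.

Lemma mulKq x y : x \ (x * y) = y.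
Proof. by apply: (@mulqI x); rewrite divKq. Qed.

Lemma mulKq' x y : x \ (y * x) = y.
Proof. by rewrite mulC mulKq. Qed.

Lemma divqq x : x \ x = e.
Proof. by rewrite -{2}(mulq1 x) mulKq. Qed.

Lemma divqK x y : (y \ x) \ x = y.
Proof. by apply: (@mulqI (y \ x)); rewrite divKq mulC divKq. Qed.

Lemma invqK x : x^-1^-1 = x.
Proof. exact: divqK. Qed.

Lemma invq_uniq x y : x * y = e -> y = x^-1.
Proof. by move=> <-; rewrite mulKq. Qed.

Lemma pw_succ x n : pw x (Z.succ n) = x * pw x n.
Proof. exact: (lpow_succ e divKq). Qed.

Lemma pw_pred x n : pw x (Z.pred n) = x \ pw x n.
Proof. exact: (lpow_pred e mulKq divKq). Qed.

Lemma pw1 x : pw x 1 = x.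
Proof. exact: mulq1. Qed.

Section Automorphism.
Variable f : T -> T.
Hypothesis f_aut : automorphism mul f.

Lemma autM x y : f (x * y) = f x * f y.
Proof. by case: f_aut. Qed.

Lemma aut1 : f e = e.
Proof. by apply: (@mulqI (f e)); rewrite -autM !mulq1. Qed.

Lemma autD x y : f (x \ y) = f x \ f y.
Proof. by apply: (@mulqI (f x)); rewrite -autM !divKq. Qed.

Lemma autV x : f x^-1 = (f x)^-1.
Proof. by rewrite autD aut1. Qed.

Lemma aut_fix_pw x : f x = x -> forall n, f (pw x n) = pw x n.
Proof.
move=> fx; elim/Z.peano_ind => [|n IH|n IH]; first exact: aut1.
  by rewrite pw_succ autM fx IH.
by rewrite pw_pred autD fx IH.
Qed.

End Automorphism.

Definition linner p q t := p * q \ (p * (q * t)).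

Lemma linner_aut p q : automorphism mul (linner p q).
Proof.
case: Q => _ [_ [_ [_ inner_aut]]]; apply: inner_aut; split.
  exact: (mlt_Linv _ (mlt_L _ (mlt_L _ (mlt_id _ _ _)))).
by rewrite /linner mulq1 divqq.
Qed.

Lemma linner_fix p q : linner p q p = p.
Proof. by rewrite /linner (mulC q p) mulKq'. Qed.

Lemma linner_mull p q t : linner p q (p * t) = p * linner p q t.
Proof. by rewrite (autM (linner_aut p q)) linner_fix. Qed.

Lemma inv_divMl x y : (x * y \ x)^-1 = linner x y y.
Proof.
symmetry; apply: invq_uniq; rewrite mulC.
have <- : linner x y (y * y^-1) = e by rewrite divKq (aut1 (linner_aut x y)).
by rewrite (autM (linner_aut x y)) /linner [in RHS]divKq mulq1.
Qed.

Lemma invqM x y : (x * y)^-1 = x^-1 * y^-1.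
Proof.
set z := x * y; set u := z * x^-1.
have f_aut := linner_aut z x^-1.
have fx : linner z x^-1 x = u \ z by rewrite /linner (mulC x^-1 x) divKq mulq1.
have fy : linner z x^-1 y = u.
  have : linner z x^-1 (x * y) = z by exact: linner_fix.
  by rewrite (autM f_aut) fx => /(congr1 (ldiv (u \ z))); rewrite mulKq divqK.
have : linner z x^-1 y^-1 = u^-1 by rewrite (autV f_aut) fy.
rewrite /linner -/u => /(congr1 (mul u)); rewrite !divKq => z_inv.
by symmetry; apply: invq_uniq.
Qed.

Lemma mul_sqrC x t : x * (x * x * t) = x * x * (x * t).
Proof.
pose v := x \ (x \ (x * x * t)).
have xxv : x * (x * v) = x * x * t by rewrite !divKq.
have := linner_mull x x v.
by rewrite /linner xxv mulKq => /(congr1 (mul (x * x))); rewrite divKq.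
Qed.

Lemma oplusE x y : x ⊕ y = x \ (x \ (x * x * (x * (x * y \ x)^-1))).
Proof.
rewrite /oplus /linv invqM inv_divMl inv_divMl.
have -> : linner y x x = linner x y (y \ (x \ (y * (x * x)))).
  by rewrite /linner !divKq (mulC y x).
rewrite -(autM (linner_aut x y)) divKq.
apply: (@mulqI x); rewrite divKq; apply: (@mulqI x); rewrite divKq.
rewrite -linner_mull -linner_mull divKq (mulC y (x * x)) mul_sqrC.
have f_aut := linner_aut x y.
by rewrite (autM f_aut) (autM f_aut x x) (autM f_aut x y) linner_fix.
Qed.

Lemma oplus_bij x : bijective (oplus mul ldiv e x).
Proof.
have mul_bij a : bijective (mul a) by exact: Bijective (mulKq a) (divKq a).
have ldiv_bij a : bijective (ldiv a) by exact: Bijective (divKq a) (mulKq a).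
have ldivr_bij a : bijective (ldiv^~ a) by exact: inv_bij (divqK a).
apply: (@eq_bij _ _ (ldiv x \o ldiv x \o mul (x * x) \o mul x \o ldiv^~ e
                     \o ldiv^~ x \o mul x)) => [|y]; last by rewrite oplusE.
by repeat (apply: bij_comp;
           last by [apply: mul_bij | apply: ldiv_bij | apply: ldivr_bij]).
Qed.

Lemma oplusI x : injective (oplus mul ldiv e x).
Proof. exact: bij_inj (oplus_bij x). Qed.

Lemma oplusC x y : x ⊕ y = y ⊕ x.
Proof. by rewrite /oplus mulC. Qed.

Lemma oplus1q x : e ⊕ x = x.
Proof. by rewrite /oplus /linv mul1q mulq1 divqq mulq1 invqK. Qed.

Lemma oplus_loop : is_loop (oplus mul ldiv e) e.
Proof.
split; first exact: oplus1q.
split; first by move=> x; rewrite oplusC oplus1q.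
split; first exact: oplus_bij.
by move=> x; apply: (eq_bij (oplus_bij x)) => y; rewrite oplusC.
Qed.

Lemma mul_sqr_pw x n : x * x * pw x n = pw x (n + 2).
Proof.
have := aut_fix_pw (linner_aut x x) (linner_fix x x) n.
rewrite /linner => <-; rewrite divKq.
have -> : (n + 2 = Z.succ (Z.succ n))%Z by lia.
by rewrite !pw_succ.
Qed.

Lemma pw_shift x k n : pw x k * pw x (Z.succ n) = pw x (Z.succ k) * pw x n.
Proof.
have kx : pw x k * x = pw x (Z.succ k) by rewrite mulC pw_succ.
have fix_x : linner (pw x k) x x = x.
  rewrite /linner kx (mulC _ (x * x)) mul_sqr_pw.
  have -> : (k + 2 = Z.succ (Z.succ k))%Z by lia.
  by rewrite (pw_succ x (Z.succ k)) mulKq'.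
have := aut_fix_pw (linner_aut (pw x k) x) fix_x n.
by rewrite /linner kx -pw_succ => <-; rewrite divKq.
Qed.

Lemma pw_add x m n : pw x m * pw x n = pw x (m + n).
Proof.
elim/Z.peano_ind: m n => [n|m IH n|m IH n]; first exact: mul1q.
  by rewrite -pw_shift IH; congr (pw x _); lia.
rewrite -{1}(Z.succ_pred n) pw_shift Z.succ_pred IH; congr (pw x _); lia.
Qed.

Lemma pw_inv x k : (pw x k)^-1 = pw x (- k).
Proof. by symmetry; apply: invq_uniq; rewrite pw_add Z.add_opp_diag_r. Qed.

Lemma pw_div x m n : pw x m \ pw x n = pw x (n - m).
Proof. by apply: (@mulqI (pw x m)); rewrite divKq pw_add; congr (pw x _); lia. Qed.

Lemma oplus_pw x m n : pw x m ⊕ pw x n = pw x (m + n).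
Proof.
by rewrite /oplus /linv !pw_add !pw_div pw_add pw_inv; congr (pw x _); lia.
Qed.

Section OplusDivisions.
Variables ldiv' rdiv' : T -> T -> T.
Hypothesis ldiv'P : is_ldiv (oplus mul ldiv e) ldiv'.
Hypothesis rdiv'P : is_rdiv (oplus mul ldiv e) rdiv'.

Lemma oplus_ldiv_pw x i j : ldiv' (pw x i) (pw x j) = pw x (j - i).
Proof. by apply: (@oplusI (pw x i)); rewrite ldiv'P oplus_pw; congr (pw x _); lia. Qed.

Lemma oplus_rdiv_pw x i j : rdiv' (pw x i) (pw x j) = pw x (i - j).
Proof.
by apply: (@oplusI (pw x j)); rewrite oplusC rdiv'P oplus_pw; congr (pw x _); lia.
Qed.

Lemma oplus_gen_pw x a : gen (oplus mul ldiv e) e ldiv' rdiv' x a -> exists k, a = pw x k.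
Proof.
elim=> [| | ? ? _ [i ->] _ [j ->] | ? ? _ [i ->] _ [j ->] | ? ? _ [i ->] _ [j ->]].
- by exists 1%Z; rewrite pw1.
- by exists 0%Z.
- by exists (i + j)%Z; rewrite oplus_pw.
- by exists (j - i)%Z; rewrite oplus_ldiv_pw.
- by exists (i - j)%Z; rewrite oplus_rdiv_pw.
Qed.

Lemma oplus_power_assoc : power_associative (oplus mul ldiv e) e ldiv' rdiv'.
Proof.
move=> x a b c /oplus_gen_pw [i ->] /oplus_gen_pw [j ->] /oplus_gen_pw [k ->].
by rewrite !oplus_pw; congr (pw x _); lia.
Qed.

Lemma lpow_oplus x n : lpow (oplus mul ldiv e) e ldiv' x n = pw x n.
Proof.
have oplusK a b : ldiv' a (a ⊕ b) = b by apply: (@oplusI a); rewrite ldiv'P.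
apply: (lpow_unique oplusK ldiv'P) => // {}n.
by rewrite -{2}(pw1 x) oplus_pw Z.add_1_l.
Qed.

End OplusDivisions.

End CommutativeALoop.

Theorem proposition4p4 (T : Type) (mul ldiv rdiv : T -> T -> T) (e : T) :
  commutative_A_loop mul e ldiv rdiv ->
  let op := oplus mul ldiv e in
  is_loop op e /\ commutative_op op /\
  (forall ldiv' rdiv' : T -> T -> T,
     is_ldiv op ldiv' -> is_rdiv op rdiv' ->
     power_associative op e ldiv' rdiv' /\
     (forall x (n : Z), lpow op e ldiv' x n = lpow mul e ldiv x n)).
Proof.
move=> Q op; rewrite {}/op.
split; first exact: oplus_loop Q.
split; first exact: oplusC Q.
move=> ldiv' rdiv' ldiv'P rdiv'P; split.
  exact (oplus_power_assoc Q ldiv'P rdiv'P).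
exact (lpow_oplus Q ldiv'P).
Qed.
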